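(* Let $T_e=\{0,6,10,28,36,66,78,\dots\}$ be the set of even triangular numbers and $T_o=\{1,3,15,21,45,55,\dots\}$ the set of odd triangular numbers (a triangular number is an integer of the form $k(k+1)/2$ with $k\ge 0$ an integer). Then for every even integer $n\geq 1$, $$\sum_{t\in T_e,\ t\le n} p\!\left(\frac{n-t}{2}\right)=p_d(n),$$ and for every odd integer $n\geq 1$, $$\sum_{t\in T_o,\ t\le n} p\!\left(\frac{n-t}{2}\right)=p_o(n).$$
   Context: $p(n)$ is the number of partitions of $n$ (with $p(0)=1$), $p_d(n)$ is the number of partitions of $n$ into distinct parts, and $p_o(n)$ is the number of partitions of $n$ into odd parts. In the sums, each triangular number is counted once. *)

From mathcomp Require Import all_boot.
Unset Printing Implicit Defensive.

(* A partition of n is encoded by its multiplicity function: m i is the number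
   of parts equal to i (for 1 <= i <= n); there are no parts equal to 0, and
   the parts sum to n.  Parts and multiplicities are at most n, so the
   multiplicity function lives in the finite type {ffun 'I_n.+1 -> 'I_n.+1}. *)
Definition is_partition (n : nat) (m : {ffun 'I_n.+1 -> 'I_n.+1}) : bool :=
  (nat_of_ord (m ord0) == 0) && (\sum_(i < n.+1) i * m i == n).

Definition p (n : nat) : nat := #|[set m : {ffun 'I_n.+1 -> 'I_n.+1} | is_partition n m]|.

Definition pd (n : nat) : nat :=
  #|[set m : {ffun 'I_n.+1 -> 'I_n.+1} | is_partition n m && [forall i : 'I_n.+1, m i <= 1]]|.

Definition po (n : nat) : nat :=
  #|[set m : {ffun 'I_n.+1 -> 'I_n.+1} | is_partition n m && [forall i : 'I_n.+1, ~~ odd i ==> (nat_of_ord (m i) == 0)]]|.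

(* t is triangular: t = k(k+1)/2 for some integer k >= 0 (necessarily k <= t). *)
Definition is_triangular (t : nat) : bool :=
  [exists k : 'I_t.+1, k * k.+1 == t.*2].

(* Power series are truncated: polynomials over int are compared modulo X^(n+1).
   Write (a;q)_n for \prod_(i < n) (1 - a q^i).  Gauss's identity
     \sum_m q^(m(m+1)/2) = (-q;q)_oo^2 (q;q)_oo,
   obtained from Rothe's q-binomial theorem for \prod_(i < 2L) (q^L + q^i), together with
   (-q;q)_oo (q;q)_oo = (q^2;q^2)_oo and 1/(q^2;q^2)_oo = \sum_k p(k) q^(2k), gives
     (\sum_m q^(m(m+1)/2)) (\sum_k p(k) q^(2k)) = (-q;q)_oo = \sum_n pd(n) q^n.
   The coefficient of q^n on the left is the sum of p((n-t)/2) over the triangular t of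
   the parity of n.  Euler's identity (-q;q)_oo (q;q^2)_oo = 1, i.e. pd = po, gives the
   odd case. *)

From mathcomp Require Import all_boot all_algebra.
From mathcomp Require Import zify ring.
Unset Printing Implicit Defensive.
Import GRing.Theory Num.Theory.
Local Open Scope ring_scope.

Section CongruenceModXn.
Local Set Implicit Arguments.
Local Unset Strict Implicit.
Variable R : nzRingType.
Implicit Types (a p q u v : {poly R}) (M k : nat).

Definition eqmodX M p q := forall i, (i < M)%N -> p`_i = q`_i.

Lemma eqmodX_sym M p q : eqmodX M p q -> eqmodX M q p.
Proof. by move=> epq i /epq ->. Qed.

Lemma eqmodX_trans M p q r : eqmodX M p q -> eqmodX M q r -> eqmodX M p r.
Proof. by move=> epq eqr i lt_iM; rewrite epq // eqr. Qed.

Lemma eqmodXW M' M p q : (M' <= M)%N -> eqmodX M p q -> eqmodX M' p q.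
Proof. by move=> leM epq i lt_iM; rewrite epq // (leq_trans lt_iM). Qed.

Lemma eqmodXD M p q u v : eqmodX M p q -> eqmodX M u v -> eqmodX M (p + u) (q + v).
Proof. by move=> epq euv i lt_iM; rewrite !coefD epq // euv. Qed.

Lemma eqmodXN M p q : eqmodX M p q -> eqmodX M (- p) (- q).
Proof. by move=> epq i lt_iM; rewrite !coefN epq. Qed.

Lemma eqmodXM M p q u v : eqmodX M p q -> eqmodX M u v -> eqmodX M (p * u) (q * v).
Proof.
move=> epq euv i lt_iM; rewrite !coefM; apply: eq_bigr => j _.
by rewrite epq ?euv // (leq_ltn_trans _ lt_iM) ?leq_subr // -ltnS.
Qed.

Lemma eqmodX_sum M (I : Type) (r : seq I) (P : pred I) (F G : I -> {poly R}) :
  (forall i, P i -> eqmodX M (F i) (G i)) ->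
  eqmodX M (\sum_(i <- r | P i) F i) (\sum_(i <- r | P i) G i).
Proof. by move=> eFG; apply: (big_rec2 (eqmodX M)) => // i p q /eFG; apply: eqmodXD. Qed.

Lemma eqmodX_prod M (I : Type) (r : seq I) (P : pred I) (F G : I -> {poly R}) :
  (forall i, P i -> eqmodX M (F i) (G i)) ->
  eqmodX M (\prod_(i <- r | P i) F i) (\prod_(i <- r | P i) G i).
Proof. by move=> eFG; apply: (big_rec2 (eqmodX M)) => // i p q /eFG; apply: eqmodXM. Qed.

Lemma eqmodX_Xn M k : (M <= k)%N -> eqmodX M 'X^k 0.
Proof. by move=> le_Mk i lt_iM; rewrite coefXn coef0 ltn_eqF // (leq_trans lt_iM le_Mk). Qed.

Lemma eqmodX_XnM M k p : (M <= k)%N -> eqmodX M ('X^k * p) 0.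
Proof. by move=> le_Mk i lt_iM; rewrite coefXnM coef0 (leq_trans lt_iM le_Mk). Qed.

Lemma eqmodX_1addXn M k : (M <= k)%N -> eqmodX M (1 + 'X^k) 1.
Proof. by move=> le_Mk; rewrite -[X in eqmodX _ _ X]addr0; apply/eqmodXD/eqmodX_Xn. Qed.

Lemma eqmodX_1subXn M k : (M <= k)%N -> eqmodX M (1 - 'X^k) 1.
Proof.
by move=> le_Mk; rewrite -[X in eqmodX _ _ X]subr0; apply/eqmodXD/eqmodXN/eqmodX_Xn.
Qed.

Lemma eqmodX_sum0 M (I : Type) (r : seq I) (P : pred I) (F : I -> {poly R}) :
  (forall i, P i -> eqmodX M (F i) 0) -> eqmodX M (\sum_(i <- r | P i) F i) 0.
Proof. by move=> /(eqmodX_sum r); rewrite big1_eq. Qed.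

Lemma eqmodX_prod1 M (I : Type) (r : seq I) (P : pred I) (F : I -> {poly R}) :
  (forall i, P i -> eqmodX M (F i) 1) -> eqmodX M (\prod_(i <- r | P i) F i) 1.
Proof. by move=> /(eqmodX_prod r); rewrite big1_eq. Qed.

Lemma eqmodX_sum_ord_trunc M n K (F : nat -> {poly R}) : (n <= K)%N ->
  (forall i, (n <= i < K)%N -> eqmodX M (F i) 0) ->
  eqmodX M (\sum_(i < K) F i) (\sum_(i < n) F i).
Proof.
move=> le_nK eF0; rewrite -!(big_mkord xpredT) (big_cat_nat (leq0n _) le_nK) //=.
rewrite -[X in eqmodX _ _ X]addr0; apply: eqmodXD => //.
by rewrite big_nat_cond; apply: eqmodX_sum0 => i /andP[/eF0].
Qed.

Lemma eqmodX_prod_ord_trunc M n K (F : nat -> {poly R}) : (n <= K)%N ->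
  (forall i, (n <= i < K)%N -> eqmodX M (F i) 1) ->
  eqmodX M (\prod_(i < K) F i) (\prod_(i < n) F i).
Proof.
move=> le_nK eF1; rewrite -!(big_mkord xpredT) (big_cat_nat (leq0n _) le_nK) //=.
rewrite -[X in eqmodX _ _ X]mulr1; apply: eqmodXM => //.
by rewrite big_nat_cond; apply: eqmodX_prod1 => i /andP[/eF1].
Qed.

Lemma eqmodX_comp_Xn M k p q : (0 < k)%N -> eqmodX M p q -> eqmodX M (p \Po 'X^k) (q \Po 'X^k).
Proof.
move=> k_gt0 epq i lt_iM; rewrite !coef_comp_poly_Xn //; case: ifP => // _.
by rewrite epq // (leq_ltn_trans (leq_div _ _)).
Qed.

Lemma eqmodX_mulIr M a w u v :
  eqmodX M (a * w) 1 -> eqmodX M (u * a) (v * a) -> eqmodX M u v.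
Proof.
move=> aw1 ua_va; rewrite -[u]mulr1 -[v]mulr1.
apply: (eqmodX_trans (q := u * a * w)); first by rewrite -mulrA; apply/eqmodXM/eqmodX_sym.
apply: (eqmodX_trans (q := v * a * w)); first exact: eqmodXM.
by rewrite -mulrA; apply: eqmodXM.
Qed.

End CongruenceModXn.

Section QBinomial.
Local Set Implicit Arguments.
Local Unset Strict Implicit.
Variables (R : comNzRingType) (q : R).

Fixpoint qbin n k : R :=
  match n, k with
  | _, 0 => 1
  | 0, _.+1 => 0
  | n'.+1, k'.+1 => qbin n' k' + q ^+ k'.+1 * qbin n' k
  end.

Lemma qbin0 n : qbin n 0 = 1. Proof. by case: n. Qed.

Lemma qbinSS n k : qbin n.+1 k.+1 = qbin n k + q ^+ k.+1 * qbin n k.+1.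
Proof. by []. Qed.

Lemma qbin_small n k : (n < k)%N -> qbin n k = 0.
Proof. by elim: n k => [|n IHn] [|k] //= lt_nk; rewrite !IHn ?mulr0 ?addr0 // ltnW. Qed.

Lemma qbin_rothe n x w : \prod_(i < n) (x + w * q ^+ i) =
  \sum_(k < n.+1) q ^+ 'C(k, 2) * qbin n k * w ^+ k * x ^+ (n - k).
Proof.
elim: n x w => [|n IHn] x w; first by rewrite big_ord0 big_ord1 /= bin_small // !expr0 !mulr1.
rewrite big_ord_recl /= expr0 mulr1.
under eq_bigr do rewrite exprS mulrA.
rewrite IHn mulrDl !big_distrr /=.
rewrite [RHS]big_ord_recl /= ?qbin0 expr0 !mulr1 subn0 bin_small // expr0 mul1r /bump /=.
under [X in _ = _ + X]eq_bigr do rewrite !add1n add0n subSS mulrDr mulrDl mulrDl.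
rewrite big_split /= [X in _ = _ + X]addrC addrA; congr (_ + _); last first.
  by apply: eq_bigr => k _; rewrite binS bin1 exprD exprMn !exprS; ring.
rewrite big_ord_recl /= bin_small // qbin0 expr0 !mul1r subn0 -exprS.
rewrite [in RHS]big_ord_recr /= qbin_small // !(mulr0, mul0r) addr0; congr (_ + _).
apply: eq_bigr => k _; rewrite /bump /= add1n -(subnSK (ltn_ord k)).
by rewrite exprS binS bin1 exprD exprMn !exprS; ring.
Qed.

Definition qfac n : R := \prod_(i < n) (1 - q ^+ i.+1).

Lemma qfac0 : qfac 0 = 1. Proof. by rewrite /qfac big_ord0. Qed.

Lemma qfacS n : qfac n.+1 = qfac n * (1 - q ^+ n.+1).
Proof. by rewrite /qfac big_ord_recr. Qed.

Lemma qbin_qfac n k : (k <= n)%N -> qbin n k * qfac k * qfac (n - k) = qfac n.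
Proof.
elim: n k => [|n IHn] [|k] le_kn; rewrite ?qbin0 ?qfac0 ?mul1r ?mulr1 ?subn0 //.
have left_term : qbin n k * qfac k.+1 * qfac (n - k) = qfac n * (1 - q ^+ k.+1).
  by rewrite -(IHn k le_kn) qfacS; ring.
rewrite subSS qbinSS mulrDl mulrDl left_term [RHS]qfacS.
have [->|lt_kn] := eqVneq k n; first by rewrite qbin_small // mulr0 !mul0r addr0.
have {}lt_kn : (k < n)%N by rewrite ltn_neqAle lt_kn.
have right_term : qbin n k.+1 * (qfac k.+1 * qfac (n - k)) = qfac n * (1 - q ^+ (n - k)).
  by rewrite -(IHn k.+1 lt_kn) -[(n - k)%N]subnSK // (qfacS (n - k.+1)); ring.
have qpowers : q ^+ k.+1 * (1 - q ^+ (n - k)) = q ^+ k.+1 - q ^+ n.+1.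
  by rewrite mulrBr mulr1 -exprD addSn subnKC // ltnW.
by rewrite -!mulrA right_term mulrCA qpowers; ring.
Qed.

End QBinomial.

Arguments qbin : simpl never.

Lemma coef_prod_sum_Xn (R : comNzRingType) n (Q : 'I_n.+1 -> 'I_n.+1 -> bool) k :
  (\prod_(i < n.+1) \sum_(j < n.+1) (Q i j)%:R * 'X^(i * j) : {poly R})`_k =
  #|[set m : {ffun 'I_n.+1 -> 'I_n.+1} |
     [forall i, Q i (m i)] && (\sum_(i < n.+1) i * m i == k)%N]|%:R.
Proof.
rewrite bigA_distr_bigA /= coef_sum -sum1_card natr_sum [in RHS]big_mkcond /=.
apply: eq_bigr => m _; rewrite big_split /= prodrXr inE.
have [/forallP Qm | notQm] := boolP [forall i, Q i (m i)].
  by rewrite big1 ?mul1r ?coefXn ?(eq_sym k) => [|i _]; [case: eqP | rewrite Qm].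
move: notQm; rewrite negb_forall => /existsP[i /negbTE notQi].
by rewrite (bigD1 i) //= notQi !mul0r coef0.
Qed.

Lemma coef_partition_gf (R : comNzRingType) n (Q : 'I_n.+1 -> 'I_n.+1 -> bool) :
  Q ord0 ord0 ->
  (\prod_(i < n) \sum_(j < n.+1) (Q (lift ord0 i) j)%:R * 'X^(i.+1 * j) : {poly R})`_n =
  #|[set m | is_partition n m && [forall i, Q i (m i)]]|%:R.
Proof.
move=> Q00; pose Qpart (i j : 'I_n.+1) := ((i == 0 :> nat) ==> (j == 0 :> nat)) && Q i j.
have -> : [set m : {ffun 'I_n.+1 -> 'I_n.+1} | is_partition n m && [forall i, Q i (m i)]] =
          [set m : {ffun 'I_n.+1 -> 'I_n.+1} |
             [forall i, Qpart i (m i)] && (\sum_(i < n.+1) i * m i == n)%N].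
  apply/setP => m; rewrite !inE /is_partition /Qpart andbAC; congr (_ && _).
  apply/andP/forallP => [[/eqP m0 /forallP Qm] i | Qpartm].
    rewrite Qm andbT; apply/implyP => /eqP i0.
    by rewrite (_ : i = ord0) ?m0 //; apply: val_inj.
  split; first by case/andP: (Qpartm ord0) => /implyP->.
  by apply/forallP => i; case/andP: (Qpartm i).
rewrite -coef_prod_sum_Xn [in RHS]big_ord_recl big_ord_recl /= mul0n expr0 mulr1 /Qpart /= Q00.
by rewrite [\sum_(j < n) _]big1 ?addr0 ?mul1r // => j _; rewrite mul0r.
Qed.

Definition geosum n k : {poly int} := \sum_(j < n.+1) 'X^(k * j).
Definition pgf n : {poly int} := \prod_(i < n) geosum n i.+1.
Definition pdgf n : {poly int} := \prod_(i < n) (1 + 'X^(i.+1)).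
Definition pogf n : {poly int} := \prod_(i < n | odd i.+1) geosum n i.+1.

Lemma coef_pgf n : (pgf n)`_n = (p n)%:R.
Proof.
have -> : pgf n = \prod_(i < n) \sum_(j < n.+1) true%:R * 'X^(i.+1 * j).
  by apply: eq_bigr => i _; apply: eq_bigr => j _; rewrite mul1r.
rewrite (coef_partition_gf _ _ (fun _ _ => true)) //; congr _%:R.
by apply: eq_card => m; rewrite !inE; case: is_partition => //=; apply/forallP.
Qed.

Lemma coef_pdgf n : (pdgf n)`_n = (pd n)%:R.
Proof.
have -> : pdgf n = \prod_(i < n) \sum_(j < n.+1) (j <= 1)%:R * 'X^(i.+1 * j).
  apply: eq_bigr; case: n => [[] // | n] i _; rewrite 2!big_ord_recl big1 => [|j _] /=.
    by rewrite muln0 muln1 !mul1r addr0.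
  by rewrite mul0r.
by rewrite (coef_partition_gf _ _ (fun _ j => j <= 1)%N).
Qed.

Lemma coef_pogf n : (pogf n)`_n = (po n)%:R.
Proof.
have -> : pogf n =
    \prod_(i < n) \sum_(j < n.+1) (~~ odd i.+1 ==> (j == 0 :> nat))%:R * 'X^(i.+1 * j).
  rewrite /pogf big_mkcond; apply: eq_bigr => i _; case: ifP => odd_i /=.
    by apply: eq_bigr => j _; rewrite mul1r.
  rewrite big_ord_recl big1 => [|j _] /=; first by rewrite muln0 mul1r addr0.
  by rewrite mul0r.
by rewrite (coef_partition_gf _ _ (fun i j => ~~ odd i ==> (j == 0 :> nat))).
Qed.

Local Notation euler n := (qfac ('X : {poly int}) n).

Lemma geosum_mul_1subXn n k : geosum n k * (1 - 'X^k) = 1 - 'X^(k * n.+1).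
Proof.
rewrite /geosum exprM; under eq_bigr do rewrite exprM.
by move: (_ ^+ k) => y; rewrite -[RHS]opprB subrX1; ring.
Qed.

Lemma pgf_euler n : eqmodX n.+1 (pgf n * euler n) 1.
Proof.
rewrite /pgf /qfac -big_split /=; apply: eqmodX_prod1 => i _.
by rewrite geosum_mul_1subXn; apply: eqmodX_1subXn; rewrite leq_pmull.
Qed.

Lemma euler_trunc m K : (m <= K)%N -> eqmodX m.+1 (euler K) (euler m).
Proof.
move=> le_mK; apply: eqmodX_prod_ord_trunc (fun i => 1 - 'X^(i.+1)) le_mK _.
by move=> i /andP[le_mi _]; apply: eqmodX_1subXn.
Qed.

Lemma coef_euler_inv m N U : (m <= N)%N -> eqmodX N.+1 (U * euler N) 1 -> U`_m = (p m)%:R.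
Proof.
move=> le_mN UeN; rewrite -coef_pgf; apply/esym.
suff pgf_U : eqmodX m.+1 (pgf m) U by apply: pgf_U.
apply: (eqmodX_mulIr (a := euler m) (w := pgf m)); first by rewrite mulrC; apply: pgf_euler.
apply: eqmodX_trans (pgf_euler m) _; apply/eqmodX_sym/(eqmodX_trans _ (eqmodXW _ UeN)).
  by apply: eqmodXM => //; apply/eqmodX_sym/euler_trunc.
by rewrite ltnS.
Qed.

Lemma pdgf_euler n : pdgf n * euler n = euler n \Po 'X^2.
Proof.
rewrite /pdgf /qfac -big_split rmorph_prod; apply: eq_bigr => i _ /=.
rewrite rmorphB rmorph1 rmorphXn /= comp_polyX -exprM mulnC exprM.
by ring.
Qed.

Lemma euler2_pgf2 n : eqmodX n.+1 ((euler n \Po 'X^2) * (pgf n \Po 'X^2)) 1.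
Proof.
have := eqmodX_comp_Xn (k := 2) isT (pgf_euler n).
by rewrite comp_polyM rmorph1 mulrC.
Qed.

Lemma euler_even_double K :
  \prod_(i < K.*2 | ~~ odd i.+1) (1 - 'X^(i.+1)) = euler K \Po 'X^2 :> {poly int}.
Proof.
elim: K => [|K IHK]; first by rewrite big_ord0 qfac0 rmorph1.
rewrite doubleS big_mkcond 2!big_ord_recr /= -big_mkcond IHK /= odd_double mulr1.
by rewrite qfacS comp_polyM rmorphB rmorph1 rmorphXn /= comp_polyX -exprM mulnC -muln2.
Qed.

Lemma euler_even n :
  eqmodX n.+1 (\prod_(i < n | ~~ odd i.+1) (1 - 'X^(i.+1))) (euler n \Po 'X^2).
Proof.
rewrite -euler_even_double big_mkcond [X in eqmodX _ _ X]big_mkcond /=.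
pose F i : {poly int} := if ~~ odd i.+1 then 1 - 'X^(i.+1) else 1.
apply/eqmodX_sym/(eqmodX_prod_ord_trunc (F := F)) => [|i /andP[le_ni _]]; first lia.
by rewrite /F; case: ifP => _ //; apply: eqmodX_1subXn.
Qed.

Lemma pogf_pdgf n : eqmodX n.+1 (pogf n) (pdgf n).
Proof.
pose odd_part : {poly int} := \prod_(i < n | odd i.+1) (1 - 'X^(i.+1)).
pose even_part : {poly int} := \prod_(i < n | ~~ odd i.+1) (1 - 'X^(i.+1)).
have euler_split : euler n = odd_part * even_part.
  by rewrite /qfac (bigID (fun i : 'I_n => odd i.+1)).
have pogf_odd : eqmodX n.+1 (pogf n * odd_part) 1.
  rewrite /pogf -big_split; apply: eqmodX_prod1 => i _ /=.
  by rewrite geosum_mul_1subXn; apply: eqmodX_1subXn; rewrite leq_pmull.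
have pdgf_odd : eqmodX n.+1 (pdgf n * odd_part) 1.
  apply: (eqmodX_trans (q := pdgf n * odd_part * (even_part * (pgf n \Po 'X^2)))).
    rewrite -[X in eqmodX _ X]mulr1; apply: eqmodXM => //.
    apply/eqmodX_sym/(eqmodX_trans _ (euler2_pgf2 n)).
    by apply: eqmodXM => //; apply: euler_even.
  have -> : pdgf n * odd_part * (even_part * (pgf n \Po 'X^2)) =
            pdgf n * euler n * (pgf n \Po 'X^2) by rewrite euler_split; ring.
  by rewrite pdgf_euler; apply: euler2_pgf2.
apply: (eqmodX_mulIr (a := odd_part) (w := pogf n)); first by rewrite mulrC.
exact: eqmodX_trans pogf_odd (eqmodX_sym pdgf_odd).
Qed.

Definition tri m := 'C(m.+1, 2).

Lemma bin2_double a : ('C(a, 2) * 2 = a * a.-1)%N.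
Proof. by rewrite mulnC -mul_bin_diag bin1. Qed.

Lemma tri_double m : (tri m * 2 = m.+1 * m)%N.
Proof. exact: bin2_double. Qed.

Lemma leq_tri m : (m <= tri m)%N.
Proof. by have := tri_double m; nia. Qed.

Lemma tri_inj : injective tri.
Proof. by move=> a b /(congr1 (muln^~ 2%N)); rewrite /= !tri_double; nia. Qed.

Lemma is_triangularP t : reflect (exists m, tri m = t) (is_triangular t).
Proof.
have tri_eq m : (tri m == t) = (m * m.+1 == t.*2)%N.
  by rewrite -(eqn_pmul2r (isT : 0 < 2)%N) tri_double muln2 mulnC.
apply: (iffP existsP) => [[m] | [m tri_m]]; first by rewrite -tri_eq => /eqP; exists m.
have le_mt : (m < t.+1)%N by rewrite ltnS -tri_m leq_tri.
by exists (Ordinal le_mt); rewrite -tri_eq tri_m.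
Qed.

Definition trigf n : {poly int} := \sum_(m < n.+1) 'X^(tri m).

Lemma coef_trigf n t : (t <= n)%N -> (trigf n)`_t = (is_triangular t)%:R.
Proof.
move=> le_tn; rewrite coef_sum; case: is_triangularP => [[m tri_m] | no_tri].
  have lt_mn : (m < n.+1)%N by rewrite ltnS (leq_trans (leq_tri m)) ?tri_m.
  rewrite (bigD1 (Ordinal lt_mn)) //= coefXn tri_m eqxx big1 ?addr0 // => k.
  by rewrite -val_eqE coefXn -tri_m (inj_eq tri_inj) eq_sym => /negbTE ->.
by rewrite big1 // => k _; rewrite coefXn; case: eqP => // t_tri; case: no_tri; exists k.
Qed.

Lemma eqmodX_mul2 M (p q : {poly int}) : eqmodX M (2 * p) (2 * q) -> eqmodX M p q.
Proof. by move=> epq i /epq /eqP; rewrite !mulr_natl !coefMn eqr_pMn2r // => /eqP. Qed.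

Lemma prod_Xn_addXi_low L :
  \prod_(i < L) ('X^L + 'X^i) = 'X^('C(L, 2)) * pdgf L :> {poly int}.
Proof.
have split_term (i : 'I_L) : 'X^L + 'X^i = 'X^i * (1 + 'X^(L - i)) :> {poly int}.
  by rewrite mulrDr mulr1 -exprD subnKC 1?addrC // ltnW.
rewrite (eq_bigr _ (fun i _ => split_term i)) big_split /= prodrXr -bin2_sum big_mkord.
congr (_ * _).
rewrite /pdgf -(big_mkord xpredT (fun i => 1 + 'X^(i.+1))) big_nat_rev big_mkord.
by apply: eq_bigr => i _; rewrite add0n subnSK.
Qed.

Lemma prod_Xn_addXi_high K :
  \prod_(i < K.+1) ('X^(K.+1) + 'X^(K.+1 + i)) = 'X^(K.+1 * K.+1) * (2 * pdgf K) :> {poly int}.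
Proof.
under eq_bigr => i _ do rewrite exprD -[X in X + _]mulr1 -mulrDr.
by rewrite big_split /= prodr_const card_ord -exprM big_ord_recl expr0.
Qed.

Lemma gauss_exponent_low L m : (m <= L)%N ->
  ('C(L - m, 2) + L * (L + L - (L - m)) = 'C(L, 2) + L * L + tri m)%N.
Proof.
move=> le_mL; have := bin2_double (L - m); have := bin2_double L; have := tri_double m.
have [r ->] : exists r, L = (m + r)%N by exists (L - m)%N; lia.
by rewrite addKn; case: r => [|r]; case: m {le_mL} => [|m] /=; nia.
Qed.

Lemma gauss_exponent_high L m : (m < L)%N ->
  ('C(L.+1 + m, 2) + L * (L + L - (L.+1 + m)) = 'C(L, 2) + L * L + tri m)%N.
Proof.
move=> lt_mL; have := bin2_double (L.+1 + m); have := bin2_double L; have := tri_double m.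
have [r ->] : exists r, L = (m + r.+1)%N by exists (L - m.+1)%N; lia.
by case: m {lt_mL} => [|m] /=; nia.
Qed.

Lemma sum_centered_split (V : nmodType) L (F : nat -> V) :
  \sum_(k < (L + L).+1) F k = \sum_(m < L.+1) F (L - m)%N + \sum_(m < L) F (L.+1 + m)%N.
Proof.
have le_L1_2L1 : (L.+1 <= (L + L).+1)%N by rewrite ltnS leq_addl.
rewrite -(big_mkord xpredT) (big_cat_nat (leq0n _) le_L1_2L1) //=.
rewrite big_nat_rev big_mkord (big_addn 0 _ L.+1) subSS addnK big_mkord.
by congr (_ + _); apply: eq_bigr => i _; rewrite ?add0n ?subSS // addnC.
Qed.

Lemma gauss_finite K :
  pdgf K.+1 * (2 * pdgf K) =
  \sum_(m < K.+2) 'X^(tri m) * qbin 'X (K.+1 + K.+1) (K.+1 - m) +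
  \sum_(m < K.+1) 'X^(tri m) * qbin 'X (K.+1 + K.+1) (K.+2 + m).
Proof.
set L := K.+1.
pose c k := ('C(k, 2) + L * (L + L - k))%N.
have rothe : \prod_(i < L + L) ('X^L + 'X^i) =
             \sum_(k < (L + L).+1) 'X^(c k) * qbin ('X : {poly int}) (L + L) k.
  transitivity (\prod_(i < L + L) ('X^L + 1 * 'X^i) : {poly int}).
    by apply: eq_bigr => i _; rewrite mul1r.
  rewrite qbin_rothe; apply: eq_bigr => k _.
  by rewrite expr1n mulr1 -exprM /c exprD; ring.
rewrite big_split_ord /= prod_Xn_addXi_low prod_Xn_addXi_high in rothe.
rewrite (sum_centered_split _ L (fun k => 'X^(c k) * qbin 'X (L + L) k)) in rothe.
have XL_neq0 : 'X^('C(L, 2) + L * L) != 0 :> {poly int} by rewrite expf_neq0 ?polyX_eq0.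
apply: (mulfI XL_neq0); rewrite mulrDr !big_distrr /= exprD mulrACA rothe.
congr (_ + _); apply: eq_bigr => m _; rewrite mulrA -!exprD /c.
  by rewrite gauss_exponent_low // -ltnS.
by rewrite gauss_exponent_high.
Qed.

Lemma pdgf_trunc m K : (m <= K)%N -> eqmodX m.+1 (pdgf K) (pdgf m).
Proof.
move=> le_mK; apply: (eqmodX_prod_ord_trunc (F := fun i => 1 + 'X^(i.+1))) => //.
by move=> i /andP[le_mi _]; apply: eqmodX_1addXn.
Qed.

Lemma trigf_trunc n K : (n < K)%N -> eqmodX n.+1 (\sum_(m < K) 'X^(tri m)) (trigf n).
Proof.
move=> lt_nK; apply: (eqmodX_sum_ord_trunc (F := fun m => 'X^(tri m))) => //.
by move=> m /andP[lt_nm _]; apply/eqmodX_Xn/(leq_trans lt_nm (leq_tri m)).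
Qed.

Lemma qbin_euler n N j : (n <= j <= N - n)%N -> eqmodX n.+1 (qbin 'X N j * euler n) 1.
Proof.
move=> /andP[le_nj le_jNn]; apply: (eqmodX_mulIr (a := euler n) (w := pgf n)).
  by rewrite mulrC; apply: pgf_euler.
rewrite mul1r; apply: (eqmodX_trans (q := qbin 'X N j * euler j * euler (N - j))).
  by apply: eqmodXM; [apply: eqmodXM => // |]; apply/eqmodX_sym/euler_trunc; lia.
by rewrite qbin_qfac; [apply: euler_trunc | ]; lia.
Qed.

Lemma tri_qbin_euler n N j m : ((tri m <= n)%N -> (n <= j <= N - n)%N) ->
  eqmodX n.+1 ('X^(tri m) * qbin 'X N j * euler n) 'X^(tri m).
Proof.
move=> j_range; have [/j_range j_range_n | lt_nt] := leqP (tri m) n.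
  by rewrite -mulrA -[X in eqmodX _ _ X]mulr1; apply/eqmodXM/qbin_euler.
rewrite -mulrA; apply: (eqmodX_trans (eqmodX_XnM _ lt_nt)).
exact/eqmodX_sym/eqmodX_Xn.
Qed.

Lemma gauss n : eqmodX n.+1 (pdgf n ^+ 2 * euler n) (trigf n).
Proof.
apply: eqmodX_mul2; have := gauss_finite n.*2; set L := n.*2.+1 => gaussL.
apply: (eqmodX_trans (q := pdgf L * (2 * pdgf n.*2) * euler n)).
  have pdgf_L : eqmodX n.+1 (pdgf L) (pdgf n) by apply: pdgf_trunc; rewrite /L; lia.
  have pdgf_2n : eqmodX n.+1 (pdgf n.*2) (pdgf n) by apply: pdgf_trunc; lia.
  rewrite (_ : 2 * _ = pdgf n * (2 * pdgf n) * euler n); last by ring.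
  by apply: eqmodXM => //; apply: eqmodXM; [|apply: eqmodXM] => //; apply: eqmodX_sym.
rewrite gaussL mulrDl !big_distrl /= mulr2n mulrDl mul1r; apply: eqmodXD.
  apply: (eqmodX_trans _ (trigf_trunc n L.+1 _)); last by rewrite /L; lia.
  apply: eqmodX_sum => -[m /= lt_mL] _; apply: tri_qbin_euler => /(leq_trans (leq_tri m)).
  by rewrite /L in lt_mL *; lia.
apply: (eqmodX_trans _ (trigf_trunc n L _)); last by rewrite /L; lia.
apply: eqmodX_sum => -[m /= lt_mL] _; apply: tri_qbin_euler => /(leq_trans (leq_tri m)).
by rewrite /L in lt_mL *; lia.
Qed.

Lemma trigf_pgf2 n : eqmodX n.+1 (trigf n * (pgf n \Po 'X^2)) (pdgf n).
Proof.
apply: (eqmodX_trans (q := pdgf n ^+ 2 * euler n * (pgf n \Po 'X^2))).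
  by apply: eqmodXM => //; apply/eqmodX_sym/gauss.
rewrite (_ : _ * _ = pdgf n * ((pdgf n * euler n) * (pgf n \Po 'X^2))); last by ring.
by rewrite pdgf_euler -[X in eqmodX _ _ X]mulr1; apply: eqmodXM => //; apply: euler2_pgf2.
Qed.

Lemma coef_pgf2 n s : (s <= n)%N ->
  (pgf n \Po 'X^2)`_s = if odd s then 0 else (p s./2)%:R.
Proof.
move=> le_sn; rewrite coef_comp_poly_Xn // dvdn2 -divn2; case: odd => //.
by apply: coef_euler_inv (pgf_euler n); rewrite (leq_trans (leq_div _ _)).
Qed.

Lemma coef_trigf_pgf2 n : (trigf n * (pgf n \Po 'X^2))`_n =
  (\sum_(t < n.+1 | is_triangular t && (odd t == odd n)) p ((n - t)./2))%:R.
Proof.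
rewrite coefM natr_sum [in RHS]big_mkcond; apply: eq_bigr => t _.
rewrite coef_trigf -1?ltnS // coef_pgf2 ?leq_subr // oddB -1?ltnS //.
by case: is_triangular; case: (odd t); case: (odd n); rewrite ?mul0r ?mul1r.
Qed.

Lemma sum_triangular_p_pd n :
  (\sum_(t < n.+1 | is_triangular t && (odd t == odd n)) p ((n - t)./2))%N = pd n.
Proof.
apply/eqP; rewrite -(eqr_nat int) -coef_trigf_pgf2 -coef_pdgf.
by apply/eqP/trigf_pgf2.
Qed.

Lemma sum_triangular_p_po n :
  (\sum_(t < n.+1 | is_triangular t && (odd t == odd n)) p ((n - t)./2))%N = po n.
Proof.
apply/eqP; rewrite -(eqr_nat int) -coef_trigf_pgf2 -coef_pogf.
by apply/eqP; apply: (eqmodX_trans (trigf_pgf2 n) (eqmodX_sym (pogf_pdgf n))).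
Qed.

Local Close Scope ring_scope.

Theorem theorem1 :
  (forall n : nat, 0 < n -> ~~ odd n ->
     \sum_(0 <= t < n.+1 | is_triangular t && ~~ odd t) p ((n - t)./2) = pd n)
  /\
  (forall n : nat, 0 < n -> odd n ->
     \sum_(0 <= t < n.+1 | is_triangular t && odd t) p ((n - t)./2) = po n).
Proof.
split=> n _ n_parity; rewrite big_mkord.
  rewrite -sum_triangular_p_pd (negbTE n_parity).
  by apply: eq_bigl => t; case: odd.
rewrite -sum_triangular_p_po n_parity.
by apply: eq_bigl => t; case: odd.
Qed.
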